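(* Let $p$ be an odd prime, $\mathbb{F}$ a field of characteristic $p$, and $a,s$ natural numbers with $a<p$. For every set partition $\delta$ of $\{1,\ldots,as\}$ into $s$ sets of size $a$, there exists $g\in N_{S_{asp}}(R_{as})$ such that $K_\delta\cong\mathbb{F}\uparrow_{E_s^g}^C$ as $\mathbb{F}C$-modules.
   Context: For $j\geq1$ let $z_j=(p(j-1)+1,\ldots,pj)$ and $\mathcal{O}_j=\{p(j-1)+1,\ldots,pj\}$; $\sigma=z_1\cdots z_{as}$, $R_{as}=\langle\sigma\rangle$, $C=\langle z_1\rangle\times\cdots\times\langle z_{as}\rangle$. For $j\in\{1,\ldots,s\}$ let $\pi_j=z_jz_{j+s}z_{j+2s}\cdots z_{j+(a-1)s}$ and $E_s=\langle\pi_1\rangle\times\cdots\times\langle\pi_s\rangle\leq C$. $H^{(a^{sp})}$ is the $\mathbb{F}S_{asp}$-permutation module on set partitions of $\{1,\ldots,asp\}$ into $sp$ sets of size $a$; its Brauer quotient $H^{(a^{sp})}(R_{as})$ is identified with the span of the set partitions fixed by $R_{as}$. A fixed set partition $\omega$ has type $\delta=\{\delta_1,\ldots,\delta_s\}$ if there are sets $A_1,\ldots,A_s$ with $|A_i\cap\mathcal{O}_j|=1$ if $j\in\delta_i$ and $0$ otherwise, and $\omega=\{A_i\sigma^k:1\leq i\leq s,0\leq k\leq p-1\}$; $K_\delta$ is the $\mathbb{F}C$-submodule spanned by fixed set partitions of type $\delta$. *)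

From mathcomp Require Import all_boot all_order all_algebra all_fingroup.
Set Implicit Arguments. Unset Strict Implicit. Unset Printing Implicit Defensive.
Import GRing.Theory.

(* Points {1,...,asp} are encoded as pairs (j, k) : 'I_(a*s) * 'I_p,
   the pair (j,k) standing for the point p*j + k + 1.  Hence the orbit
   O_{j+1} = {p j + 1, ..., p (j+1)} is [set x | x.1 == j], and the cycle
   z_{j+1} maps (j,k) to (j, k+1 mod p).  Indices j of z_j, O_j are 0-based. *)
Notation pt a s p := ('I_(a * s) * 'I_p)%type.

Section Defs.
Variables a s p : nat.

Definition zfun (j : nat) (x : pt a s p) : pt a s p :=
  if x.1 == j :> nat then (x.1, ordS x.2) else x.

Lemma zfun_inj j : injective (zfun j).
Proof.
move=> [x1 x2] [y1 y2]; rewrite /zfun /=.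
case: ifP => hx; case: ifP => hy => E;
  have /= e1 := congr1 fst E; have /= e2 := congr1 snd E; subst.
- by rewrite (ordS_inj e2).
- by rewrite hx in hy.
- by rewrite hy in hx.
- by [].
Qed.

Definition zcyc (j : nat) : {perm pt a s p} := perm (@zfun_inj j).

Definition orb (j : nat) : {set pt a s p} := [set x : pt a s p | x.1 == j :> nat].

Definition sigma : {perm pt a s p} := (\prod_(j < a * s) zcyc j)%g.

Definition Rgrp : {group {perm pt a s p}} := <[sigma]>%G.

(* C = <z_1> x ... x <z_{as}> (internal product = generated subgroup) *)
Definition Cgrp : {group {perm pt a s p}} :=
  <<\bigcup_(j < a * s) <[zcyc j]> >>%G.

Definition piel (j : nat) : {perm pt a s p} := (\prod_(i < a) zcyc (j + i * s))%g.

Definition Egrp : {group {perm pt a s p}} :=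
  <<\bigcup_(j < s) <[piel j]> >>%G.

Definition spact (g : {perm pt a s p}) (w : {set {set pt a s p}}) :
  {set {set pt a s p}} := (fun B : {set pt a s p} => [set g x | x in B]) @: w.

Definition is_setpart_pts (w : {set {set pt a s p}}) : bool :=
  [&& partition w [set: pt a s p], #|w| == s * p & [forall B in w, #|B| == a]].

Definition is_setpart_idx (d : {set {set 'I_(a * s)}}) : bool :=
  [&& partition d [set: 'I_(a * s)], #|d| == s & [forall D in d, #|D| == a]].

Definition fixedR (w : {set {set pt a s p}}) : bool := spact sigma w == w.

Definition has_type (d : {set {set 'I_(a * s)}}) (w : {set {set pt a s p}}) : bool :=
  [exists A : {ffun {set 'I_(a * s)} -> {set pt a s p}},
    [forall D in d, forall j : 'I_(a * s), #|A D :&: orb j| == (j \in D)]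
    && (w == (fun (D : {set 'I_(a * s)}) (k : 'I_p) => [set (sigma ^+ k)%g x | x in A D])
               @2: (d, [set: 'I_p]))].

(* the basis of K_delta: fixed set partitions of shape (a^{sp}) and type d *)
Definition Kbasis (d : {set {set 'I_(a * s)}}) : {set {set {set pt a s p}}} :=
  [set w | [&& is_setpart_pts w, fixedR w & has_type d w]].
End Defs.

Section PermMod.
Variable F : fieldType.
Local Open Scope ring_scope.

(* matrix (row-vector convention) of the permutation f of a finite set S,
   in the basis indexed by S: e_u * M = e_{f u} *)
Definition permmx (T : finType) (S : {set T}) (f : T -> T) : 'M[F]_#|S| :=
  \matrix_(i, j) ((f (enum_val i) == enum_val j)%:R)%R.

Definition Krep a s p (d : {set {set 'I_(a * s)}}) (g : {perm pt a s p}) :=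
  permmx (Kbasis p d) (spact g).

(* F induced from H up to G (trivial module F of H):
   F (x)_{FH} FG, with basis 1 (x) t, t running over right cosets Ht;
   g acts by Ht |-> Htg *)
Definition indtriv (gT : finGroupType) (H G : {set gT}) (g : gT) :=
  permmx (rcosets H G) (fun X => X :* g)%g.

(* isomorphism of FG-modules given by matrix representations
   (same as mathcomp's mx_rsim, without requiring representation proofs) *)
Definition rep_iso (gT : finGroupType) (G : {set gT}) n1 n2
  (r1 : gT -> 'M[F]_n1) (r2 : gT -> 'M[F]_n2) : Prop :=
  n1 = n2 /\ exists B : 'M[F]_(n1, n2),
    row_free B /\ forall x, x \in G -> r1 x *m B = B *m r2 x.
End PermMod.

From mathcomp Require Import all_boot all_order all_algebra all_fingroup zify.
Set Implicit Arguments. Unset Strict Implicit. Unset Printing Implicit Defensive.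
Import GRing.Theory.

(* Elements of C are the rotations that turn each orbit O_{j+1} by its own
   amount e j.  The R-fixed set partitions of type d are the partitions
   {A_D sigma^k} where A_D meets O_{j+1} (j in D) in the point (j, e j);
   rotating by f replaces e with e + f, so C permutes them transitively and
   K_d is the permutation module on one C-orbit, i.e. the trivial module
   induced from a point stabilizer.  The stabilizer of the partition with
   e = 0 consists of the rotations constant on every block of d.  Relabelling
   the orbits so that the blocks of d become the supports
   {j, j + s, ..., j + (a - 1) s} of the pi_j commutes with sigma, hence
   normalizes R, and conjugates E_s onto that stabilizer. *)

Section PermutationModules.
Variable F : fieldType.
Local Open Scope ring_scope.

Lemma sum_enum_delta (T : finType) (S : {set T}) (u : T) (G : 'I_#|S| -> F)
    (Su : u \in S) :
  \sum_k ((u == enum_val k)%:R * G k) = G (enum_rank_in Su u).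
Proof.
rewrite (bigD1 (enum_rank_in Su u)) //= enum_rankK_in // eqxx mul1r.
rewrite big1 ?addr0 // => k /negbTE nk.
by rewrite -{1}(enum_rankK_in Su Su) (inj_eq enum_val_inj) eq_sym nk mul0r.
Qed.

(* The intertwiner is the permutation matrix of phi. *)
Lemma permmx_rep_iso (gT : finGroupType) (G : {set gT}) (T1 T2 : finType)
    (S1 : {set T1}) (S2 : {set T2}) (f1 : gT -> T1 -> T1) (f2 : gT -> T2 -> T2)
    (phi : T1 -> T2) :
  {in S1 &, injective phi} -> phi @: S1 = S2 ->
  (forall x u, x \in G -> u \in S1 -> f1 x u \in S1 /\ phi (f1 x u) = f2 x (phi u)) ->
  rep_iso G (fun x => permmx F S1 (f1 x)) (fun x => permmx F S2 (f2 x)).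
Proof.
move=> phi_inj phiS phi_equiv; rewrite -phiS.
have phiS1 u : u \in S1 -> phi u \in phi @: S1 by move=> Su; rewrite imset_f.
split; first by rewrite card_in_imset.
pose B : 'M[F]_(#|S1|, #|phi @: S1|) :=
  \matrix_(i, j) ((phi (enum_val i) == enum_val j)%:R).
exists B; split=> [|x Gx].
  apply/row_freeP; exists B^T; apply/matrixP => i i'.
  have Si := enum_valP i; have Si' := enum_valP i'.
  rewrite !mxE; under eq_bigr => k _ do rewrite !mxE.
  rewrite (sum_enum_delta _ (phiS1 _ Si)).
  rewrite enum_rankK_in ?phiS1 // (inj_in_eq phi_inj) //.
  by rewrite (inj_eq enum_val_inj) eq_sym.
apply/matrixP => i j; have Si := enum_valP i.
have [Sxi phixi] := phi_equiv x _ Gx Si.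
rewrite !mxE; under eq_bigr => k _ do rewrite !mxE.
under [RHS]eq_bigr => k _ do rewrite !mxE.
rewrite (sum_enum_delta _ Sxi) (sum_enum_delta _ (phiS1 _ Si)).
by rewrite !enum_rankK_in ?phiS1 // phixi.
Qed.

Lemma orbit_rep_iso (gT : finGroupType) (T : finType) (to : {action gT &-> T})
    (G : {group gT}) (u : T) :
  rep_iso G (fun x => permmx F (orbit to G u) (to^~ x))
            (indtriv F 'C_G[u | to]%g G).
Proof.
have sGT : G \subset [set: gT] by apply: subsetT.
apply: (permmx_rep_iso (phi := amove to G u) (f1 := fun x y => to y x)
  (f2 := fun x X => X :* x)%g (can_in_inj (amoveK sGT)) (amove_orbit to u sGT)).
move=> x _ Gx /orbitP[y Gy <-].
by rewrite -actM mem_orbit ?groupM // !(amove_act to u sGT) ?groupM // rcosetM.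
Qed.
End PermutationModules.

Section Rotations.
Variables a s p : nat.
Local Notation n := (a * s).
Local Notation P := (pt a s p).

Lemma ord_gt0 m (i : 'I_m) : 0 < m.
Proof. exact: leq_ltn_trans (leq0n i) (ltn_ord i). Qed.

Definition rotfun (e : 'I_n -> nat) (x : P) : P :=
  (x.1, Ordinal (ltn_pmod (x.2 + e x.1) (ord_gt0 x.2))).

Lemma rotfun_inj e : injective (rotfun e).
Proof.
move=> [x1 x2] [y1 y2] [<- /eqP]; rewrite eqn_modDr !modn_small // => /eqP e2.
by congr pair; apply: val_inj.
Qed.

(* [rotate e] acts on O_{j+1} as z_{j+1} ^+ e j; these are the elements of C. *)
Definition rotate e : {perm P} := perm (@rotfun_inj e).

Lemma rotateE e x : rotate e x = rotfun e x.
Proof. by rewrite permE. Qed.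

Lemma eq_rotate e f : (forall j, e j = f j %[mod p]) -> rotate e = rotate f.
Proof.
move=> ef; apply/permP => -[x1 x2]; rewrite !rotateE; congr pair.
by apply/val_inj => /=; rewrite -modnDmr ef modnDmr.
Qed.

Lemma rotateM e f : (rotate e * rotate f)%g = rotate (fun j => e j + f j).
Proof.
apply/permP => -[x1 x2]; rewrite permM !rotateE; congr pair.
by apply/val_inj => /=; rewrite modnDml addnA.
Qed.

Lemma rotate0 : rotate (fun _ => 0) = 1%g.
Proof.
apply/permP => -[x1 x2]; rewrite perm1 rotateE; congr pair.
by apply/val_inj => /=; rewrite addn0 modn_small.
Qed.

Lemma big_rotate (I : Type) (r : seq I) (P : pred I) (e : I -> 'I_n -> nat) :
  (\prod_(i <- r | P i) rotate (e i))%g = rotate (fun j => \sum_(i <- r | P i) e i j).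
Proof.
elim: r => [|i r IHr].
  by rewrite big_nil -rotate0; apply: eq_rotate => j; rewrite big_nil.
by rewrite big_cons IHr; case Pi: (P i); rewrite ?rotateM;
  apply: eq_rotate => j; rewrite big_cons Pi.
Qed.

Lemma rotateX e m : (rotate e ^+ m)%g = rotate (fun j => e j * m).
Proof.
elim: m => [|m IHm].
  by rewrite expg0 -rotate0; apply: eq_rotate => j; rewrite muln0.
by rewrite expgS IHm rotateM; apply: eq_rotate => j; rewrite mulnS.
Qed.

Lemma zcycE (j : nat) : zcyc a s p j = rotate (fun i => i == j :> nat).
Proof.
apply/permP => -[x1 x2]; rewrite permE rotateE /zfun /=.
by case E: (x1 == j :> nat); congr pair; apply/val_inj;
  rewrite /= E ?addn1 ?addn0 // modn_small.
Qed.

Lemma sigmaX m : (sigma a s p ^+ m)%g = rotate (fun _ => m).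
Proof.
rewrite /sigma; under eq_bigr => j _ do rewrite zcycE.
rewrite big_rotate rotateX; apply: eq_rotate => i.
rewrite (bigD1 i) //= eqxx big1 ?addn0 ?mul1n // => j.
by rewrite eq_sym val_eqE => /negbTE ->.
Qed.

Lemma pielE (j : nat) :
  piel a s p j = rotate (fun i => \sum_(t < a) (i == j + t * s :> nat)).
Proof. by rewrite /piel; under eq_bigr => t _ do rewrite zcycE; rewrite big_rotate. Qed.

Lemma rotate_in_C e : rotate e \in Cgrp a s p.
Proof.
have -> : rotate e = (\prod_(j < n) zcyc a s p j ^+ e j)%g.
  under eq_bigr => j _ do rewrite zcycE rotateX.
  rewrite big_rotate; apply: eq_rotate => i.
  rewrite (bigD1 i) //= eqxx mul1n big1 ?addn0 // => j.
  by rewrite eq_sym val_eqE => /negbTE ->.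
apply: group_prod => j _; apply/groupX/mem_gen/bigcupP; exists j => //.
exact: cycle_id.
Qed.

Lemma C_rotate g : g \in Cgrp a s p -> exists e, g = rotate e.
Proof.
case/gen_prodgP => m [c Cc ->]; elim/big_ind: _ => [|_ _ [e ->] [f ->]|i _].
- by exists (fun _ => 0); rewrite rotate0.
- by exists (fun j => e j + f j); rewrite rotateM.
have /bigcupP[j _ /cycleP[k ->]] := Cc i.
by rewrite zcycE rotateX; eexists.
Qed.

Definition relabel_fun (h : {perm 'I_n}) (x : P) : P := (h x.1, x.2).

Lemma relabel_fun_inj h : injective (relabel_fun h).
Proof. by move=> [x1 x2] [y1 y2] [/perm_inj <- <-]. Qed.

Definition relabel h : {perm P} := perm (@relabel_fun_inj h).

Lemma rotate_conj h e : (rotate e ^ (relabel h)^-1)%g = rotate (fun j => e (h j)).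
Proof.
apply/permP => x; rewrite conjgE invgK !permM -[RHS](permK (relabel h)).
by congr (_ _); rewrite !permE /relabel_fun /rotfun /=; congr pair; apply: val_inj.
Qed.

Lemma relabel_norm h : relabel h \in 'N(Rgrp a s p)%g.
Proof.
rewrite -groupV; apply/normP; rewrite /Rgrp /= -cycleJ -[sigma a s p]expg1.
by rewrite sigmaX rotate_conj.
Qed.
End Rotations.

Lemma eqn_add_mul_ltn (s b j x t : nat) : b < s -> j < s ->
  (b + x * s == j + t * s) = (b == j) && (x == t).
Proof.
move=> bs js; apply/eqP/andP => [E | [/eqP-> /eqP->] //].
have mod_s y z : y < s -> (y + z * s) %% s = y.
  by move=> ys; rewrite addnC modnMDl modn_small.
have div_s y z : y < s -> (y + z * s) %/ s = z.
  by move=> ys; rewrite addnC divnMDl ?divn_small ?addn0 //; apply: leq_ltn_trans bs.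
split; apply/eqP; first by rewrite -(mod_s b x) // E mod_s.
by rewrite -(div_s b x) // E div_s.
Qed.

Section BlockIndexing.
Variables (a s : nat) (d : {set {set 'I_(a * s)}}).
Hypothesis dP : is_setpart_idx d.
Local Notation n := (a * s).

Lemma setpart_trivIset : trivIset d.
Proof. by case/and3P: dP => /and3P[]. Qed.

Lemma setpart_cover y : y \in cover d.
Proof. by case/and3P: dP => /and3P[/eqP-> _ _] _ _; rewrite inE. Qed.

Lemma setpart_card : #|d| = s.
Proof. by case/and3P: dP => _ /eqP. Qed.

Lemma setpart_block_card D : D \in d -> #|D| = a.
Proof. by case/and3P: dP => _ _ /forall_inP dD /dD /eqP. Qed.

Lemma setpart_block_n0 D : D \in d -> exists y, y \in D.
Proof.
case/and3P: dP => /and3P[_ _ d_n0] _ _ Dd.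
case: (set_0Vmem D) => [D0 | [y yD]]; last by exists y.
by move: d_n0; rewrite -D0 Dd.
Qed.

Local Notation pb := (pblock d).

Lemma pblock_setpart y : pb y \in d.
Proof. exact: pblock_mem (setpart_cover y). Qed.

Lemma mem_pblock_setpart y : y \in pb y.
Proof. by rewrite mem_pblock setpart_cover. Qed.

Lemma pblock_setpartE D y : D \in d -> y \in D -> pb y = D.
Proof. exact: def_pblock setpart_trivIset. Qed.

Definition blk y := index (pb y) (enum d).
Definition pos y := index y (enum (pb y)).

Lemma blk_lt y : blk y < s.
Proof.
by rewrite -setpart_card cardE index_mem mem_enum pblock_setpart.
Qed.

Lemma pos_lt y : pos y < a.
Proof.
rewrite -(setpart_block_card (pblock_setpart y)) cardE.
by rewrite index_mem mem_enum mem_pblock_setpart.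
Qed.

Lemma blk_inj y y' : blk y = blk y' -> pb y = pb y'.
Proof.
have pb_enum z : pb z \in enum d by rewrite mem_enum pblock_setpart.
move=> eq_blk; rewrite -(nth_index set0 (pb_enum y)) -/(blk y) eq_blk.
by rewrite nth_index.
Qed.

Lemma tau_lt y : blk y + pos y * s < n.
Proof. by have := blk_lt y; have := pos_lt y; nia. Qed.

Definition tau_fun y : 'I_n := Ordinal (tau_lt y).

Lemma tau_fun_inj : injective tau_fun.
Proof.
move=> y y' /(congr1 val) /eqP /=; rewrite eqn_add_mul_ltn ?blk_lt //.
case/andP => /eqP/blk_inj eq_pb /eqP eq_pos.
rewrite -(nth_index y (_ : y \in enum (pb y))) ?mem_enum ?mem_pblock_setpart //.
by rewrite -/(pos y) eq_pos eq_pb nth_index // mem_enum mem_pblock_setpart.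
Qed.

(* The j-th block of d is sent to {j, j + s, ..., j + (a - 1) s}, the support
   of pi_{j+1}. *)
Definition tau : {perm 'I_n} := perm tau_fun_inj.

Lemma sum_tau_blk y (j : nat) : j < s ->
  \sum_(t < a) (tau y == j + t * s :> nat) = (blk y == j).
Proof.
move=> js; rewrite permE /=.
under eq_bigr => t _ do rewrite eqn_add_mul_ltn ?blk_lt //.
have [_|_] /= := eqP; last by rewrite big1.
rewrite (bigD1 (Ordinal (pos_lt y))) //= eqxx big1 // => t /negbTE.
by rewrite -val_eqE eq_sym => ->.
Qed.
End BlockIndexing.

Section TypedPartitions.
Variables (a s p : nat) (d : {set {set 'I_(a * s)}}).
Hypotheses (p_gt0 : 0 < p) (dP : is_setpart_idx d).
Local Notation n := (a * s).
Local Notation P := (pt a s p).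
Local Notation pb := (pblock d).
Implicit Types (D : {set 'I_n}) (e f : 'I_n -> nat) (k : 'I_p).

Lemma piel_conj (j : nat) : j < s ->
  (piel a s p j ^ (relabel p (tau dP))^-1)%g = rotate p (fun y => blk d y == j).
Proof.
by move=> js; rewrite pielE rotate_conj; apply: eq_rotate => y; rewrite sum_tau_blk.
Qed.

(* [shifted_block e D 0] is the set A_D of the paper, meeting O_{j+1}
   (j in D) in the point (j, e j mod p); [shifted_block e D k] is A_D sigma^k. *)
Definition shifted_block (e : 'I_n -> nat) (D : {set 'I_n}) (k : 'I_p) : {set P} :=
  [set x : P | (x.1 \in D) && (val x.2 == (k + e x.1) %% p)].

Definition shifted_setpart e : {set {set P}} :=
  [set shifted_block e D k | D in d, k in [set: 'I_p]].

Definition shifted_pt (e : 'I_n -> nat) (k : nat) (j : 'I_n) : P :=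
  (j, Ordinal (ltn_pmod (k + e j) p_gt0)).

Lemma shifted_pt_in e D k j : j \in D -> shifted_pt e k j \in shifted_block e D k.
Proof. by move=> jD; rewrite inE /= jD eqxx. Qed.

Lemma shifted_blockE e D k : shifted_block e D k = [set shifted_pt e k j | j in D].
Proof.
apply/setP => -[x1 x2]; rewrite inE /=.
apply/andP/imsetP => [[x1D /eqP x2E]|[j jD [-> ->]]] //.
by exists x1 => //; congr pair; apply: val_inj.
Qed.

Lemma card_shifted_block e D k : D \in d -> #|shifted_block e D k| = a.
Proof.
move=> Dd; rewrite shifted_blockE card_imset ?(setpart_block_card dP Dd) //.
by move=> j j' /(congr1 fst).
Qed.

Lemma eq_shifted_block e f D k k' :
  (forall j, j \in D -> k + e j = k' + f j %[mod p]) ->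
  shifted_block e D k = shifted_block f D k'.
Proof.
by move=> ef; apply/setP => x; rewrite !inE; case xD: (x.1 \in D); rewrite //= ef.
Qed.

Lemma rotate_shifted_block e f D k :
  [set rotate p f x | x in shifted_block e D k] =
  shifted_block (fun j => e j + f j) D k.
Proof.
apply/setP => y; apply/imsetP/idP => [[x]|].
  by rewrite !inE rotateE => /andP[xD /eqP x2E] ->; rewrite /= xD x2E modnDml addnA /=.
rewrite inE => /andP[yD /eqP y2E].
exists (shifted_pt e k y.1); first exact: shifted_pt_in.
case: y yD y2E => y1 y2 /= yD y2E; rewrite rotateE; congr pair; apply: val_inj => /=.
by rewrite modnDml -addnA -y2E.
Qed.

Lemma spact_rotate e f :
  spact (rotate p f) (shifted_setpart e) = shifted_setpart (fun j => e j + f j).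
Proof.
apply/setP => B; apply/imsetP/imset2P => [[_ /imset2P[D k Dd kT ->] ->]|].
  by exists D k; rewrite ?rotate_shifted_block.
case=> D k Dd kT ->.
exists (shifted_block e D k); last by rewrite rotate_shifted_block.
by apply/imset2P; exists D k.
Qed.

Lemma shifted_block_inj e D D' k k' : D \in d -> D' \in d ->
  shifted_block e D k = shifted_block e D' k' -> D = D' /\ k = k'.
Proof.
move=> Dd Dd' eqB; have [y yD] := setpart_block_n0 dP Dd.
have := shifted_pt_in e k yD; rewrite eqB inE /= => /andP[yD' /eqP].
rewrite -(pblock_setpartE dP Dd yD) (pblock_setpartE dP Dd' yD') => /eqP.
by rewrite eqn_modDr !modn_small // => /eqP/val_inj.
Qed.

Lemma card_shifted_setpart e : #|shifted_setpart e| = s * p.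
Proof.
rewrite /shifted_setpart curry_imset2X card_in_imset; last first.
  by move=> [D k] [D' k'] /setXP[Dd _] /setXP[Dd' _] /shifted_block_inj[] // -> ->.
by rewrite cardsX (setpart_card dP) cardsT card_ord.
Qed.

Lemma modn_subK x c : (x + c + (p - c %% p)) %% p = x %% p.
Proof.
rewrite -addnA -modnDmr -(modnDml c) subnKC ?modnn ?addn0 //.
by rewrite ltnW // ltn_pmod.
Qed.

Lemma partition_shifted_setpart e : partition (shifted_setpart e) [set: P].
Proof.
apply/and3P; split.
- apply/eqP/setP => x; rewrite inE; apply/bigcupP.
  pose k := Ordinal (ltn_pmod (x.2 + (p - e x.1 %% p)) p_gt0).
  exists (shifted_block e (pb x.1) k); first by apply/imset2P; exists (pb x.1) k;
    rewrite ?pblock_setpart ?inE.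
  by rewrite inE mem_pblock_setpart //= modnDml addnAC modn_subK modn_small.
- apply/trivIsetP => _ _ /imset2P[D k Dd _ ->] /imset2P[D' k' Dd' _ ->] neqB.
  rewrite -setI_eq0; apply/eqP/setP => x; rewrite !inE.
  apply/negP => /andP[/andP[xD /eqP x2E] /andP[xD' /eqP]]; rewrite x2E => /eqP.
  rewrite eqn_modDr !modn_small // => /eqP/val_inj eq_k; apply: (negP neqB).
  by rewrite -(pblock_setpartE dP Dd xD) (pblock_setpartE dP Dd' xD') eq_k.
- apply/imset2P => -[D k Dd _ eqB]; have [y yD] := setpart_block_n0 dP Dd.
  by have := shifted_pt_in e k yD; rewrite -eqB inE.
Qed.

Lemma eq_shifted_setpart e f :
  (forall D, D \in d -> exists c, forall y, y \in D -> f y = e y + c %[mod p]) ->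
  shifted_setpart f = shifted_setpart e.
Proof.
have sub_shift e' f' : (forall D, D \in d ->
    exists c, forall y, y \in D -> f' y = e' y + c %[mod p]) ->
    shifted_setpart f' \subset shifted_setpart e'.
  move=> ef; apply/subsetP => _ /imset2P[D k Dd _ ->]; have [c fE] := ef D Dd.
  apply/imset2P; exists D (Ordinal (ltn_pmod (k + c) p_gt0)) => //.
  apply: eq_shifted_block => j jD /=.
  by rewrite -modnDmr fE // modnDmr modnDml addnA (addnAC k).
move=> ef; apply/eqP; rewrite eqEsubset sub_shift //=; apply: sub_shift => D Dd.
have [c fE] := ef D Dd; exists (p - c %% p) => y yD.
by rewrite -modnDml fE // modnDml modn_subK.
Qed.

Lemma shifted_setpart_fixed e : fixedR (shifted_setpart e).
Proof.
rewrite /fixedR -[sigma a s p]expg1 sigmaX spact_rotate.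
by apply/eqP/eq_shifted_setpart => D _; exists 1.
Qed.

Lemma shifted_setpart_type e : has_type d (shifted_setpart e).
Proof.
apply/existsP; exists [ffun D => shifted_block e D (Ordinal p_gt0)]; apply/andP; split.
  apply/forall_inP => D Dd; apply/forallP => j; rewrite ffunE.
  case jD: (j \in D).
    rewrite (_ : _ :&: _ = [set shifted_pt e 0 j]) ?cards1 //.
    apply/setP => -[x1 x2]; rewrite !inE /orb /=.
    apply/andP/eqP => [[/andP[x1D /eqP x2E] /eqP/val_inj x1E] | [-> ->]].
      by subst x1; congr pair; apply: val_inj.
    by rewrite jD /= eqxx.
  rewrite (_ : _ :&: _ = set0) ?cards0 //.
  apply/setP => -[x1 x2]; rewrite !inE /orb /=.
  by apply/negP => /andP[/andP[x1D _] /eqP/val_inj x1E]; rewrite -x1E x1D in jD.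
apply/eqP; apply: eq_in_imset2 => D k Dd _.
rewrite ffunE sigmaX rotate_shifted_block; apply: eq_shifted_block => j _ /=.
by rewrite add0n addnC.
Qed.

Lemma shifted_setpart_in_Kbasis e : shifted_setpart e \in Kbasis p d.
Proof.
rewrite inE shifted_setpart_fixed shifted_setpart_type /is_setpart_pts.
rewrite partition_shifted_setpart card_shifted_setpart eqxx /=.
rewrite andbT; apply/forall_inP => _ /imset2P[D k Dd _ ->].
by rewrite card_shifted_block.
Qed.

Lemma Kbasis_shifted w : w \in Kbasis p d -> exists e, w = shifted_setpart e.
Proof.
rewrite inE => /and3P[_ _ /existsP[A /andP[/forall_inP A_type /eqP ->]]].
have A_pt y : exists z, A (pb y) :&: orb a s p y = [set z].
  by apply/cards1P; have := forallP (A_type _ (pblock_setpart dP y)) y;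
    rewrite mem_pblock_setpart.
pose e y := if [pick z in A (pb y) :&: orb a s p y] is Some z then val z.2 else 0.
have eE y z : A (pb y) :&: orb a s p y = [set z] -> e y = z.2.
  rewrite /e => ->; case: pickP => [z'|/(_ z)]; last by rewrite set11.
  by rewrite inE => /eqP ->.
have AE D : D \in d -> A D = shifted_block e D (Ordinal p_gt0).
  move=> Dd; apply/setP => x; rewrite inE /= add0n.
  have [z Az] := A_pt x.1; rewrite (eE _ _ Az).
  apply/idP/andP => [xA | [xD /eqP x2E]].
    have xD : x.1 \in D.
      apply: contraT => xD; have := forallP (A_type _ Dd) x.1.
      by rewrite (negbTE xD) => /eqP/cards0_eq/setP/(_ x); rewrite in_set0 !inE xA eqxx.
    move: Az; rewrite (pblock_setpartE dP Dd xD) => Az.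
    have : x \in [set z] by rewrite -Az !inE xA eqxx.
    by rewrite inE => /eqP <-; rewrite modn_small.
  have : z \in A (pb x.1) :&: orb a s p x.1 by rewrite Az set11.
  rewrite (pblock_setpartE dP Dd xD) !inE => /andP[zA /eqP z1E].
  suff -> : x = z by [].
  case: x z z1E x2E {Az zA xD} => x1 x2 [z1 z2] /= /val_inj -> x2E.
  by congr pair; apply: val_inj; rewrite /= x2E modn_small.
exists e; apply: eq_in_imset2 => D k Dd _.
rewrite AE // sigmaX rotate_shifted_block; apply: eq_shifted_block => j _ /=.
by rewrite add0n addnC.
Qed.

Lemma shifted_setpart_stab f :
  shifted_setpart f = shifted_setpart (fun _ => 0) ->
  forall D, D \in d -> {in D &, forall y y', f y = f y' %[mod p]}.
Proof.
move=> eqW D Dd.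
have : shifted_block f D (Ordinal p_gt0) \in shifted_setpart (fun _ => 0).
  by rewrite -eqW; apply/imset2P; exists D (Ordinal p_gt0).
case/imset2P => D' k Dd' _ eqB.
suff fE y : y \in D -> f y = k %[mod p] by move=> y y' /fE-> /fE->.
move=> yD; have := shifted_pt_in f (Ordinal p_gt0) yD.
by rewrite eqB inE /= add0n addn0 => /andP[_ /eqP ->].
Qed.
End TypedPartitions.

Lemma spact1 a s p (w : {set {set pt a s p}}) : spact 1%g w = w.
Proof.
rewrite /spact -[RHS]imset_id; apply: eq_imset => B.
by rewrite -[RHS]imset_id; apply: eq_imset => x; rewrite perm1.
Qed.

Lemma spactM a s p (w : {set {set pt a s p}}) (g h : {perm pt a s p}) :
  spact (g * h)%g w = spact h (spact g w).
Proof.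
rewrite /spact -imset_comp; apply: eq_imset => B /=.
by rewrite -imset_comp; apply: eq_imset => x /=; rewrite permM.
Qed.

Definition spact_action a s p : {action {perm pt a s p} &-> {set {set pt a s p}}} :=
  TotalAction (to := fun w g => spact g w) (@spact1 a s p) (@spactM a s p).

Lemma spact_actionE a s p w (g : {perm pt a s p}) : spact_action a s p w g = spact g w.
Proof. by []. Qed.

Lemma Egrp_conj a s p (g : {perm pt a s p}) :
  (Egrp a s p :^ g)%g = <<\bigcup_(j < s) <[piel a s p j ^ g]> >>%g.
Proof.
rewrite /Egrp /= -genJ -bigcupJ; congr <<_>>%g.
by apply: eq_bigr => j _; rewrite cycleJ.
Qed.

Section Stabilizer.
Variables (a s p : nat) (d : {set {set 'I_(a * s)}}).
Hypotheses (p_gt0 : 0 < p) (dP : is_setpart_idx d).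
Local Notation to := (spact_action a s p).
Local Notation W0 := (shifted_setpart p d (fun _ => 0)).
Local Notation g := (relabel p (tau dP))^-1%g.

Lemma Kbasis_orbit : Kbasis p d = orbit to (Cgrp a s p) W0.
Proof.
apply/setP => w; apply/idP/orbitP => [/(Kbasis_shifted p_gt0 dP)[e ->]|[c Cc <-]].
  by exists (rotate p e); rewrite ?rotate_in_C // spact_actionE (spact_rotate _ p_gt0).
have [f ->] := C_rotate Cc; rewrite spact_actionE (spact_rotate _ p_gt0).
exact: shifted_setpart_in_Kbasis.
Qed.

Lemma Egrp_conj_sub_astab1 : (Egrp a s p :^ g \subset 'C_(Cgrp a s p)[W0 | to])%g.
Proof.
rewrite Egrp_conj gen_subG; apply/bigcupsP => j _; rewrite cycle_subG.
rewrite inE piel_conj ?ltn_ord // rotate_in_C; apply/astab1P.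
rewrite spact_actionE (spact_rotate _ p_gt0); apply: (eq_shifted_setpart p_gt0) => D Dd.
have [y0 y0D] := setpart_block_n0 dP Dd.
exists (blk d y0 == j) => y yD.
by rewrite /blk (pblock_setpartE dP Dd yD) (pblock_setpartE dP Dd y0D).
Qed.

Lemma astab1_sub_Egrp_conj : ('C_(Cgrp a s p)[W0 | to] \subset Egrp a s p :^ g)%g.
Proof.
apply/subsetP => _ /setIP[/C_rotate[f ->] /astab1P].
rewrite spact_actionE (spact_rotate _ p_gt0) => /(shifted_setpart_stab p_gt0) f_const.
pose c (j : 'I_s) := if [pick y | blk d y == j] is Some y then f y else 0.
have -> : rotate p f = (\prod_(j < s) (piel a s p j ^ g) ^+ c j)%g.
  under eq_bigr => j _ do rewrite piel_conj ?ltn_ord // rotateX.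
  rewrite big_rotate; apply: eq_rotate => y.
  rewrite (bigD1 (Ordinal (blk_lt dP y))) //= eqxx mul1n big1 ?addn0; last first.
    by move=> j; rewrite -val_eqE eq_sym /= => /negbTE ->.
  rewrite /c; case: pickP => [y' /eqP blk_y' | /(_ y)]; last by rewrite eqxx.
  have y'_in : y' \in pblock d y by rewrite -(blk_inj dP blk_y') mem_pblock_setpart.
  exact: (f_const _ (pblock_setpart dP y) y y' (mem_pblock_setpart dP y) y'_in).
rewrite Egrp_conj; apply: group_prod => j _; apply/groupX/mem_gen/bigcupP.
by exists j => //; apply: cycle_id.
Qed.

Lemma astab1_shifted_setpart0 : ('C_(Cgrp a s p)[W0 | to] = Egrp a s p :^ g)%g.
Proof. by apply/eqP; rewrite eqEsubset astab1_sub_Egrp_conj Egrp_conj_sub_astab1. Qed.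
End Stabilizer.

Theorem proposition3p5 (F : fieldType) (p a s : nat) :
  prime p -> odd p -> (p \in [pchar F])%R -> a < p ->
  forall d : {set {set 'I_(a * s)}}, is_setpart_idx d ->
  exists g : {perm pt a s p},
    g \in 'N(Rgrp a s p)%g /\
    rep_iso (Cgrp a s p) (Krep F d) (indtriv F (Egrp a s p :^ g)%g (Cgrp a s p)).
Proof.
move=> /prime_gt0 p_gt0 _ _ _ d dP.
exists (relabel p (tau dP))^-1%g; split; first by rewrite groupV relabel_norm.
rewrite -(astab1_shifted_setpart0 p_gt0 dP) /Krep (Kbasis_orbit p_gt0 dP).
exact: orbit_rep_iso.
Qed.
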